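(* Let $f(t)=\sum_{k=0}^n a_kt^k$ with $a_k\in\mathbb{H}$ be a left quaternion polynomial. Then $|J(f)(c)|\ge0$ for every $c\in\mathbb{H}$.
   Context: $\mathbb{H}$ is the real quaternion algebra, identified with $\mathbb{R}^4$ via $x+\mathbf{i}y+\mathbf{j}z+\mathbf{k}w\mapsto(x,y,z,w)$. A left polynomial $f(t)=\sum a_kt^k$ is evaluated at $c\in\mathbb{H}$ as $\sum a_kc^k$ and viewed as a map $\mathbb{R}^4\to\mathbb{R}^4$ via $f=f_1+\mathbf{i}f_2+\mathbf{j}f_3+\mathbf{k}f_4\mapsto(f_1,f_2,f_3,f_4)$; $J(f)(c)=[\partial f_i/\partial x_j](c)$ with $(x_1,\dots,x_4)=(x,y,z,w)$, and $|J(f)(c)|$ is its determinant. *)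

From Stdlib Require Import Reals List.
Open Scope R_scope.

(* Real quaternions x + i y + j z + k w, identified with (x,y,z,w) in R^4. *)
Record quat : Type := Quat { qx : R; qy : R; qz : R; qw : R }.

Definition qadd (a b : quat) : quat :=
  Quat (qx a + qx b) (qy a + qy b) (qz a + qz b) (qw a + qw b).

Definition qmul (a b : quat) : quat :=
  Quat (qx a * qx b - qy a * qy b - qz a * qz b - qw a * qw b)
       (qx a * qy b + qy a * qx b + qz a * qw b - qw a * qz b)
       (qx a * qz b - qy a * qw b + qz a * qx b + qw a * qy b)
       (qx a * qw b + qy a * qz b - qz a * qy b + qw a * qx b).

Definition qzero : quat := Quat 0 0 0 0.
Definition qone  : quat := Quat 1 0 0 0.

Fixpoint qpow (c : quat) (n : nat) : quat :=
  match n with O => qone | S m => qmul (qpow c m) c end.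

Definition qscale (t : R) (a : quat) : quat :=
  Quat (t * qx a) (t * qy a) (t * qz a) (t * qw a).

(* A left polynomial f(t) = sum_{k=0}^n a_k t^k is given by its coefficient
   list [a_0; a_1; ...; a_n]; it is evaluated at c as sum_k a_k c^k. *)
Fixpoint lpoly_eval_from (l : list quat) (k : nat) (c : quat) : quat :=
  match l with
  | nil => qzero
  | a :: l' => qadd (qmul a (qpow c k)) (lpoly_eval_from l' (S k) c)
  end.
Definition lpoly_eval (l : list quat) (c : quat) : quat := lpoly_eval_from l 0 c.

(* i-th real coordinate (i = 0..3 : x,y,z,w) *)
Definition qcomp (i : nat) (a : quat) : R :=
  match i with 0 => qx a | 1 => qy a | 2 => qz a | _ => qw a end.

Definition qbasis (j : nat) : quat :=
  match j with
  | 0 => Quat 1 0 0 0 | 1 => Quat 0 1 0 0 | 2 => Quat 0 0 1 0 | _ => Quat 0 0 0 1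
  end.

Definition is_partial (l : list quat) (c : quat) (i j : nat) (d : R) : Prop :=
  derivable_pt_lim (fun t => qcomp i (lpoly_eval l (qadd c (qscale t (qbasis j))))) 0 d.

Definition det3 (a b c d e f g h i : R) : R :=
  a * (e * i - f * h) - b * (d * i - f * g) + c * (d * h - e * g).

Definition det4 (M : nat -> nat -> R) : R :=
    M 0%nat 0%nat * det3 (M 1%nat 1%nat) (M 1%nat 2%nat) (M 1%nat 3%nat)
                         (M 2%nat 1%nat) (M 2%nat 2%nat) (M 2%nat 3%nat)
                         (M 3%nat 1%nat) (M 3%nat 2%nat) (M 3%nat 3%nat)
  - M 0%nat 1%nat * det3 (M 1%nat 0%nat) (M 1%nat 2%nat) (M 1%nat 3%nat)
                         (M 2%nat 0%nat) (M 2%nat 2%nat) (M 2%nat 3%nat)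
                         (M 3%nat 0%nat) (M 3%nat 2%nat) (M 3%nat 3%nat)
  + M 0%nat 2%nat * det3 (M 1%nat 0%nat) (M 1%nat 1%nat) (M 1%nat 3%nat)
                         (M 2%nat 0%nat) (M 2%nat 1%nat) (M 2%nat 3%nat)
                         (M 3%nat 0%nat) (M 3%nat 1%nat) (M 3%nat 3%nat)
  - M 0%nat 3%nat * det3 (M 1%nat 0%nat) (M 1%nat 1%nat) (M 1%nat 2%nat)
                         (M 2%nat 0%nat) (M 2%nat 1%nat) (M 2%nat 2%nat)
                         (M 3%nat 0%nat) (M 3%nat 1%nat) (M 3%nat 2%nat).

From Stdlib Require Import Reals List Lia Psatz.
Open Scope R_scope.

(* The differential of a left polynomial at c = x + v (v its imaginary part)
   has the form h |-> P h + Q h v: differentiating a_k c^k produces the terms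
   a_k c^i h c^(k-1-i), and every power of c lies in span{1, v}, while
   v^2 = -|v|^2 is real.  Viewing H as a right C-vector space with complex
   structure given by v/|v|, such a map is C-linear, so its real determinant is
   the squared modulus of a complex one.  Explicitly,
   det (h |-> P h + Q h v) = (|P|^2 - |v|^2 |Q|^2)^2 + 4 |v|^2 <P,Q>^2 >= 0. *)

Definition qim (c : quat) : quat := Quat 0 (qy c) (qz c) (qw c).

Definition qnorm2 (a : quat) : R :=
  qx a * qx a + qy a * qy a + qz a * qz a + qw a * qw a.

Definition qdot (a b : quat) : R :=
  qx a * qx b + qy a * qy b + qz a * qz b + qw a * qw b.

Definition qmatrix (F : quat -> quat) : nat -> nat -> R :=
  fun i j => qcomp i (F (qbasis j)).

Ltac qexpand :=
  repeat match goal with q : quat |- _ => destruct q as [?x ?y ?z ?w] end;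
  cbv beta iota zeta delta [qim qnorm2 qdot qzero qadd qmul qscale qx qy qz qw] in *.

Lemma det4_ext (J M : nat -> nat -> R) :
  (forall i j, (i < 4)%nat -> (j < 4)%nat -> J i j = M i j) -> det4 J = det4 M.
Proof. intro H. unfold det4, det3. repeat rewrite H by lia. reflexivity. Qed.

Definition left_right_form (c : quat) (F : quat -> quat) : Prop :=
  exists P Q, forall h, F h = qadd (qmul P h) (qmul Q (qmul h (qim c))).

Lemma det4_left_right_mul P Q c :
  det4 (qmatrix (fun h => qadd (qmul P h) (qmul Q (qmul h (qim c))))) =
  (qnorm2 P - qnorm2 (qim c) * qnorm2 Q) ^ 2 + 4 * qnorm2 (qim c) * qdot P Q ^ 2.
Proof.
  cbv beta iota zeta delta [det4 det3 qmatrix qbasis qcomp]. qexpand. ring.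
Qed.

Lemma det4_left_right_form_ge0 c F : left_right_form c F -> 0 <= det4 (qmatrix F).
Proof.
  intros (P & Q & HF).
  rewrite (det4_ext _ (qmatrix (fun h => qadd (qmul P h) (qmul Q (qmul h (qim c)))))).
  2:{ intros i j _ _. unfold qmatrix. now rewrite HF. }
  rewrite det4_left_right_mul.
  assert (0 <= qnorm2 (qim c)) by (unfold qnorm2; nra).
  assert (0 <= qdot P Q ^ 2) by apply pow2_ge_0.
  assert (0 <= (qnorm2 P - qnorm2 (qim c) * qnorm2 Q) ^ 2) by apply pow2_ge_0.
  nra.
Qed.

Lemma left_right_form_zero c : left_right_form c (fun _ => qzero).
Proof. exists qzero, qzero. intro h. qexpand. f_equal; ring. Qed.

Lemma left_right_form_lmul c a : left_right_form c (fun h => qmul a h).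
Proof. exists a, qzero. intro h. qexpand. f_equal; ring. Qed.

Lemma left_right_form_add c F G : left_right_form c F -> left_right_form c G ->
  left_right_form c (fun h => qadd (F h) (G h)).
Proof.
  intros (P & Q & HF) (P' & Q' & HG). exists (qadd P P'), (qadd Q Q').
  intro h. rewrite HF, HG. qexpand. f_equal; ring.
Qed.

Lemma left_right_form_lmul_comp c a F : left_right_form c F ->
  left_right_form c (fun h => qmul a (F h)).
Proof.
  intros (P & Q & HF). exists (qmul a P), (qmul a Q).
  intro h. rewrite HF. qexpand. f_equal; ring.
Qed.

(* The form survives because c = qx c + Im c and (Im c)^2 = -|Im c|^2 is real. *)
Lemma left_right_form_rmul_comp c F : left_right_form c F ->
  left_right_form c (fun h => qmul (F h) c).
Proof.
  intros (P & Q & HF).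
  exists (qadd (qscale (qx c) P) (qscale (- qnorm2 (qim c)) Q)),
         (qadd P (qscale (qx c) Q)).
  intro h. rewrite HF. qexpand. f_equal; ring.
Qed.

Fixpoint qpow_diff (c h : quat) (k : nat) : quat :=
  match k with
  | O => qzero
  | S m => qadd (qmul (qpow_diff c h m) c) (qmul (qpow c m) h)
  end.

Fixpoint lpoly_diff_from (l : list quat) (k : nat) (c h : quat) : quat :=
  match l with
  | nil => qzero
  | a :: l' => qadd (qmul a (qpow_diff c h k)) (lpoly_diff_from l' (S k) c h)
  end.

Lemma qpow_diff_form c k : left_right_form c (fun h => qpow_diff c h k).
Proof.
  induction k as [|k IH]; simpl.
  - apply left_right_form_zero.
  - apply left_right_form_add.
    + now apply left_right_form_rmul_comp.
    + apply left_right_form_lmul.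
Qed.

Lemma lpoly_diff_from_form l c :
  forall k, left_right_form c (fun h => lpoly_diff_from l k c h).
Proof.
  induction l as [|a l IH]; intro k; simpl.
  - apply left_right_form_zero.
  - apply left_right_form_add; [| apply IH].
    apply left_right_form_lmul_comp, qpow_diff_form.
Qed.

Definition qderivable_pt_lim (F : R -> quat) (x : R) (p : quat) : Prop :=
  derivable_pt_lim (fun t => qx (F t)) x (qx p) /\
  derivable_pt_lim (fun t => qy (F t)) x (qy p) /\
  derivable_pt_lim (fun t => qz (F t)) x (qz p) /\
  derivable_pt_lim (fun t => qw (F t)) x (qw p).

Lemma derivable_pt_lim_plus_fun f g x a b :
  derivable_pt_lim f x a -> derivable_pt_lim g x b ->
  derivable_pt_lim (fun t => f t + g t) x (a + b).
Proof. intros; now apply derivable_pt_lim_plus. Qed.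

Lemma derivable_pt_lim_minus_fun f g x a b :
  derivable_pt_lim f x a -> derivable_pt_lim g x b ->
  derivable_pt_lim (fun t => f t - g t) x (a - b).
Proof. intros; now apply derivable_pt_lim_minus. Qed.

Lemma derivable_pt_lim_mult_fun f g x a b :
  derivable_pt_lim f x a -> derivable_pt_lim g x b ->
  derivable_pt_lim (fun t => f t * g t) x (a * g x + f x * b).
Proof. intros; now apply derivable_pt_lim_mult. Qed.

Lemma derivable_pt_lim_eq_val f x l l' : derivable_pt_lim f x l -> l = l' ->
  derivable_pt_lim f x l'.
Proof. now intros H ->. Qed.

Lemma qderivable_pt_lim_eq_val F x p q :
  qderivable_pt_lim F x p -> p = q -> qderivable_pt_lim F x q.
Proof. now intros H ->. Qed.

Lemma qderivable_pt_lim_const a x : qderivable_pt_lim (fun _ => a) x qzero.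
Proof. repeat split; apply derivable_pt_lim_const. Qed.

Lemma qderivable_pt_lim_line c e x :
  qderivable_pt_lim (fun t => qadd c (qscale t e)) x e.
Proof.
  repeat split; simpl; (eapply derivable_pt_lim_eq_val;
    [ apply derivable_pt_lim_plus_fun;
        [ apply derivable_pt_lim_const
        | apply derivable_pt_lim_mult_fun;
            [ apply derivable_pt_lim_id | apply derivable_pt_lim_const ] ]
    | cbv beta; ring ]).
Qed.

Lemma qderivable_pt_lim_add F G x p q :
  qderivable_pt_lim F x p -> qderivable_pt_lim G x q ->
  qderivable_pt_lim (fun t => qadd (F t) (G t)) x (qadd p q).
Proof.
  intros (F1 & F2 & F3 & F4) (G1 & G2 & G3 & G4).
  repeat split; simpl; now apply derivable_pt_lim_plus_fun.
Qed.

Lemma qderivable_pt_lim_mul F G x p q :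
  qderivable_pt_lim F x p -> qderivable_pt_lim G x q ->
  qderivable_pt_lim (fun t => qmul (F t) (G t)) x
                    (qadd (qmul p (G x)) (qmul (F x) q)).
Proof.
  intros (F1 & F2 & F3 & F4) (G1 & G2 & G3 & G4).
  repeat split; simpl; (eapply derivable_pt_lim_eq_val;
    [ repeat (apply derivable_pt_lim_minus_fun || apply derivable_pt_lim_plus_fun
              || apply derivable_pt_lim_mult_fun); eassumption
    | cbv beta; ring ]).
Qed.

Lemma qadd_qscale0 c e : qadd c (qscale 0 e) = c.
Proof. qexpand. f_equal; ring. Qed.

Lemma qpow_line_derivative c e k :
  qderivable_pt_lim (fun t => qpow (qadd c (qscale t e)) k) 0 (qpow_diff c e k).
Proof.
  induction k as [|k IH]; simpl.
  - apply qderivable_pt_lim_const.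
  - eapply qderivable_pt_lim_eq_val.
    + exact (qderivable_pt_lim_mul _ _ _ _ _ IH (qderivable_pt_lim_line c e 0)).
    + cbv beta. now rewrite qadd_qscale0.
Qed.

Lemma lpoly_eval_from_line_derivative l c e : forall k,
  qderivable_pt_lim (fun t => lpoly_eval_from l k (qadd c (qscale t e))) 0
                    (lpoly_diff_from l k c e).
Proof.
  induction l as [|a l IH]; intro k; simpl.
  - apply qderivable_pt_lim_const.
  - apply qderivable_pt_lim_add; [| apply IH].
    eapply qderivable_pt_lim_eq_val.
    + exact (qderivable_pt_lim_mul _ _ _ _ _
               (qderivable_pt_lim_const a 0) (qpow_line_derivative c e k)).
    + qexpand. f_equal; ring.
Qed.

Lemma is_partial_lpoly_diff l c i j : (i < 4)%nat ->
  is_partial l c i j (qmatrix (lpoly_diff_from l 0 c) i j).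
Proof.
  intro Hi.
  destruct (lpoly_eval_from_line_derivative l c (qbasis j) 0) as (H1 & H2 & H3 & H4).
  unfold is_partial, lpoly_eval, qmatrix.
  destruct i as [|[|[|[|i]]]]; simpl; [assumption.. | lia].
Qed.

Theorem mainTheorem9 (l : list quat) (c : quat) :
  (exists J : nat -> nat -> R,
      forall i j : nat, (i < 4)%nat -> (j < 4)%nat -> is_partial l c i j (J i j)) /\
  (forall J : nat -> nat -> R,
      (forall i j : nat, (i < 4)%nat -> (j < 4)%nat -> is_partial l c i j (J i j)) ->
      0 <= det4 J).
Proof.
  split.
  - exists (qmatrix (lpoly_diff_from l 0 c)).
    intros i j Hi _. now apply is_partial_lpoly_diff.
  - intros J HJ.
    rewrite (det4_ext J (qmatrix (lpoly_diff_from l 0 c))).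
    + apply (det4_left_right_form_ge0 c), lpoly_diff_from_form.
    + intros i j Hi Hj.
      eapply uniqueness_limite; [apply HJ | apply is_partial_lpoly_diff]; assumption.
Qed.
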